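(* Let $D_{\hat 1},D_{\hat 2},D_{\hat 3},D_{\hat 4}$ be positive real numbers (with $D_{\hat i}$ standing for $D_{[4]\setminus\{i\}}$, $[4]=\{1,2,3,4\}$). There exists a positive-weighted (simple, finite) graph $\mathcal G=(G,w)$ with $[4]\subseteq V(G)$ such that $D_{\hat i}(\mathcal G)=D_{\hat i}$ for $i=1,2,3,4$ if and only if (i) $5D_{\hat t}\le 3D_{\hat k}+3D_{\hat j}+2D_{\hat i}$ for all pairwise distinct $i,j,k,t\in[4]$, and (ii) $D_{\hat i}<D_{\hat k}+D_{\hat j}$ for all pairwise distinct $i,j,k\in[4]$.
   Context: All graphs are simple and finite. A positive-weighted graph $\mathcal G=(G,w)$ is a graph $G$ with a function $w:E(G)\to\mathbb R_{>0}$; for a subgraph $G'$, $w(G')$ is the sum of the weights of the edges of $G'$. For distinct vertices $i_1,\dots,i_k$ of $G$, $D_{\{i_1,\dots,i_k\}}(\mathcal G)$ is the minimum of $w(R)$ over all connected subgraphs $R$ of $G$ whose vertex set contains $i_1,\dots,i_k$. We write $D_{\hat i}(\mathcal G)=D_{[4]\setminus\{i\}}(\mathcal G)$. The graph may have vertices other than $1,2,3,4$. *)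

From HB Require Import structures.
From mathcomp Require Import all_boot all_order all_algebra.
From mathcomp Require Import reals.
Set Implicit Arguments. Unset Strict Implicit. Unset Printing Implicit Defensive.
Import Order.TTheory GRing.Theory Num.Theory.
Local Open Scope ring_scope.

(* A simple finite graph G on vertex type T is a set E of edges, each edge
   being a 2-element subset of T.  A positive weighting is w : {set T} -> R
   with 0 < w e for every e in E. *)
Definition simple_edges (T : finType) (E : {set {set T}}) : bool :=
  [forall e in E, #|e| == 2%N].

Definition pos_weight (R : realType) (T : finType) (E : {set {set T}})
  (w : {set T} -> R) : bool := [forall e in E, 0 < w e].

Definition is_subgraph (T : finType) (E : {set {set T}})
  (VR : {set T}) (ER : {set {set T}}) : bool :=
  (ER \subset E) && [forall e in ER, e \subset VR].

Definition adj (T : finType) (ER : {set {set T}}) : rel T :=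
  fun x y => [set x; y] \in ER.

Definition sg_connected (T : finType) (VR : {set T}) (ER : {set {set T}}) : bool :=
  [forall x in VR, forall y in VR, connect (adj ER) x y].

Definition sg_weight (R : realType) (T : finType) (w : {set T} -> R)
  (ER : {set {set T}}) : R := \sum_(e in ER) w e.

(* steiner_dist E w S d  :<->  D_S(G,w) = d, i.e. d is the minimum of w(R)
   over connected subgraphs R of G whose vertex set contains S. *)
Definition steiner_dist (R : realType) (T : finType) (E : {set {set T}})
  (w : {set T} -> R) (S : {set T}) (d : R) : Prop :=
  (exists VR ER, [/\ is_subgraph E VR ER, sg_connected VR ER, S \subset VR
                   & sg_weight w ER = d]) /\
  (forall VR ER, is_subgraph E VR ER -> sg_connected VR ER -> S \subset VR ->
                 d <= sg_weight w ER).

From HB Require Import structures.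
From mathcomp Require Import all_boot all_order all_algebra fingroup perm.
From mathcomp Require Import reals lra zify.
Import Order.TTheory GRing.Theory Num.Theory.
Set Implicit Arguments. Unset Strict Implicit. Unset Printing Implicit Defensive.
Local Open Scope ring_scope.

(* Any connected subgraph spanning three terminals x, y, z contains a tripod:
   a median vertex c joined to x, y, z by legs that pairwise meet only in c.
   Necessity: cutting optimal subgraphs for the terminal triples containing
   t into their legs and regluing the legs in five ways gives connected
   subgraphs spanning the remaining triple, and the five bounds add up to
   (i); (ii) follows likewise from one or two such bounds, strictness coming
   from the positive weight of some nondegenerate leg.
   Sufficiency: with s the sum of the D_i, if 3 D_t <= s for every t, a star
   whose leaf edges weigh s/3 - D_i realizes D (centred at the terminal t
   when 3 D_t = s, which (ii) makes the largest); otherwise, for the t with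
   3 D_t > s, a 7-vertex gadget with weights D_j + D_k - D_t and 3 D_t - s,
   where (i) is exactly the condition 2 (3 D_t - s) <= D_j + D_k - D_t, does.
   In both graphs the optimality of the obvious trees is certified by three
   1-Lipschitz potentials, whose differences every tripod leg must pay. *)

Section SubgraphWeight.
Variables (R : realType) (T : finType) (w : {set T} -> R).
Implicit Types A B : {set {set T}}.

Lemma sg_weight_subset A B : A \subset B -> {in B, forall e, 0 <= w e} ->
  sg_weight w A <= sg_weight w B.
Proof.
move=> sAB w_ge0; rewrite /sg_weight [leRHS](big_setID A) /= (setIidPr sAB) lerDl.
by apply: sumr_ge0 => e; rewrite inE => /andP[_ /w_ge0].
Qed.

Lemma sg_weightU A B : [disjoint A & B] ->
  sg_weight w (A :|: B) = sg_weight w A + sg_weight w B.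
Proof. by move=> dAB; rewrite /sg_weight -bigU //; apply: eq_bigl => e; rewrite !inE. Qed.

Lemma sg_weightU_le A B : {in B, forall e, 0 <= w e} ->
  sg_weight w (A :|: B) <= sg_weight w A + sg_weight w B.
Proof.
move=> w_ge0; rewrite /sg_weight (big_setID A) setUK setDUl setDv set0U lerD2l.
exact: (sg_weight_subset (subsetDl B A)).
Qed.

End SubgraphWeight.

Section Paths.
Variable T : finType.
Implicit Types (ER : {set {set T}}) (a b c x y z : T) (p : seq T).

Fixpoint pedges a p : {set {set T}} :=
  if p is b :: p' then [set a; b] |: pedges b p' else set0.

Lemma adj_sym ER : symmetric (adj ER).
Proof. by move=> x y; rewrite /adj setUC. Qed.

Lemma sub_adj ER ER' : ER \subset ER' -> subrel (adj ER) (adj ER').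
Proof. by move=> sER x y; apply: (subsetP sER). Qed.

Lemma connect_adj_subset ER ER' x y :
  ER \subset ER' -> connect (adj ER) x y -> connect (adj ER') x y.
Proof. by move=> sER; apply: connect_sub => u v /(sub_adj sER); apply: connect1. Qed.

Lemma pedges_sub ER a p : path (adj ER) a p -> pedges a p \subset ER.
Proof.
elim: p a => [|b p IHp] a /=; first by rewrite sub0set.
by case/andP=> ab /IHp sp; rewrite subUset sub1set sp andbT.
Qed.

Lemma pedges_verts a p e : e \in pedges a p -> e \subset [set v in a :: p].
Proof.
elim: p a => [|b p IHp] a /=; first by rewrite inE.
case/setU1P=> [->|/IHp sub]; first by rewrite subUset !sub1set !inE !eqxx orbT.
by apply: (subset_trans sub); apply/subsetP => v; rewrite !inE => ->; rewrite orbT.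
Qed.

Lemma path_connect a p v : v \in a :: p -> connect (adj (pedges a p)) a v.
Proof.
elim: p a => [|b p IHp] a; first by rewrite inE => /eqP->.
rewrite inE => /predU1P[-> //|/IHp avb].
apply: (connect_trans (y := b)); first by apply: connect1; rewrite /adj !inE eqxx.
exact: connect_adj_subset (subsetU1 _ _) avb.
Qed.

Lemma path_sg_connected a p : sg_connected [set v in a :: p] (pedges a p).
Proof.
apply/forallP => u; apply/implyP; rewrite inE => up.
apply/forallP => v; apply/implyP; rewrite inE => vp.
apply: (connect_trans (y := a)); last exact: path_connect.
by rewrite (sym_connect_sym (adj_sym _)) path_connect.
Qed.

Lemma path_first_hit (e : rel T) (A : pred T) z q : path e z q -> A (last z q) ->
  exists q', [/\ path e z q', A (last z q') &
                 forall v, v \in z :: q' -> A v -> v = last z q'].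
Proof.
elim: q z => [|b q IHq] z /=.
  by move=> _ Az; exists [::]; split => // v; rewrite inE => /eqP.
case/andP=> zb bq Aq; have [Az | nAz] := boolP (A z).
  by exists [::]; split => // v; rewrite inE => /eqP.
have [q' [bq' Aq' hit]] := IHq b bq Aq.
exists (b :: q'); split => //=; first by rewrite zb.
move=> v; rewrite inE => /predU1P[-> Az|]; [by rewrite Az in nAz | exact: hit].
Qed.

(* The median c is where a path from z first hits a shortest path from x to y. *)
Lemma connect_tripod (e : rel T) x y z : connect e x y -> connect e z x ->
  exists c p1 p2 p3,
    [/\ path e x p1, path e c p2, path e z p3,
        [/\ c \in x :: p1, y \in c :: p2 & c \in z :: p3] &
        [/\ forall v, v \in x :: p1 -> v \in c :: p2 -> v = c,
            forall v, v \in x :: p1 -> v \in z :: p3 -> v = c &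
            forall v, v \in c :: p2 -> v \in z :: p3 -> v = c]].
Proof.
case/connectP=> p0 /shortenP[p xp uxp _ ->] {p0}.
case/connectP=> q0 zq0 xq0.
have Pq0 : (mem (x :: p)) (last z q0) by rewrite -xq0 /= mem_head.
have [q [zq Pq hit]] := path_first_hit zq0 Pq0.
set c := last z q in Pq hit.
case/splitPl: Pq xp uxp hit => p1 p2 cp1.
rewrite cat_path -cat_cons cat_uniq => /andP[xp1 cp2] /and3P[_ p1p2 _] hit.
have in_xp v : v \in x :: p1 ++ p2 = (v \in x :: p1) || (v \in p2).
  by rewrite -cat_cons mem_cat.
rewrite cp1 in cp2; exists c, p1, p2, q; split => //.
  by split; [rewrite -cp1 | rewrite last_cat cp1 | ]; apply: mem_last.
split=> v.
- move=> vp1; rewrite inE => /predU1P[//|vp2].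
  by move/hasPn: p1p2 => /(_ v vp2); rewrite vp1.
- by move=> vp1 /hit; apply; rewrite /= in_xp vp1.
- rewrite inE => /predU1P[-> //|vp2 /hit].
  by apply; rewrite /= in_xp vp2 orbT.
Qed.

End Paths.

Ltac set_mem := rewrite ?subUset ?sub1set !inE ?eqxx ?orbT.

Section Steiner.
Variables (R : realType) (T : finType) (E : {set {set T}}) (w : {set T} -> R).
Hypotheses (simpleE : simple_edges E) (posE : pos_weight E w).
Implicit Types (S VR : {set T}) (ER : {set {set T}}) (d : R).
Implicit Types (a c u v x y z : T) (p : seq T).

Definition spans S d := exists VR ER,
  [/\ is_subgraph E VR ER, sg_connected VR ER, S \subset VR & sg_weight w ER <= d].

Definition edge_lipschitz (phi : T -> R) :=
  forall u v, [set u; v] \in E -> phi v - phi u <= w [set u; v].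

Lemma weight_gt0 e : e \in E -> 0 < w e.
Proof. by move=> eE; move/forallP: posE => /(_ e); rewrite eE. Qed.

Lemma weight_ge0 ER : ER \subset E -> {in ER, forall e, 0 <= w e}.
Proof. by move=> sER e /(subsetP sER) /weight_gt0 /ltW. Qed.

Lemma sg_connectedP VR ER u v :
  sg_connected VR ER -> u \in VR -> v \in VR -> connect (adj ER) u v.
Proof. by move=> /forallP/(_ u)/implyP conn /conn/forallP/(_ v)/implyP. Qed.

Lemma spansW S S' d d' : S' \subset S -> d <= d' -> spans S d -> spans S' d'.
Proof.
move=> sS dd' [VR [ER [sub conn SV wd]]]; exists VR, ER.
by split=> //; [exact: subset_trans SV | exact: le_trans dd'].
Qed.

Lemma spans_ge0 S d : spans S d -> 0 <= d.
Proof.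
case=> VR [ER [/andP[sE _] _ _]]; apply: le_trans.
by apply: sumr_ge0 => e /(weight_ge0 sE).
Qed.

Lemma spans1 v : spans [set v] 0.
Proof.
exists [set v], set0; split; rewrite ?subxx ?/sg_weight ?big_set0 //.
  by rewrite /is_subgraph sub0set; apply/forallP => e; rewrite inE.
apply/forallP => x; apply/implyP; rewrite inE => /eqP->.
by apply/forallP => y; apply/implyP; rewrite inE => /eqP->.
Qed.

Lemma spans_edge u v : [set u; v] \in E -> spans [set u; v] (w [set u; v]).
Proof.
move=> uvE; exists [set u; v], [set [set u; v]]; split.
- rewrite /is_subgraph sub1set uvE /=.
  by apply/forallP => e; apply/implyP; rewrite inE => /eqP->.
- have uv : adj [set [set u; v]] u v by rewrite /adj inE.
  have vu : adj [set [set u; v]] v u by rewrite adj_sym.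
  apply/forallP => x; apply/implyP; rewrite !inE.
  by case/orP=> /eqP-> ; apply/forallP => y; apply/implyP; rewrite !inE;
    case/orP=> /eqP->; rewrite ?connect0 ?connect1.
- exact: subxx.
- by rewrite /sg_weight big_set1.
Qed.

Lemma spansU v S1 S2 d1 d2 : v \in S1 -> v \in S2 -> spans S1 d1 -> spans S2 d2 ->
  spans (S1 :|: S2) (d1 + d2).
Proof.
move=> vS1 vS2 [V1 [E1 [/andP[sE1 eV1] c1 SV1 w1]]] [V2 [E2 [/andP[sE2 eV2] c2 SV2 w2]]].
have to_v x : x \in V1 :|: V2 -> connect (adj (E1 :|: E2)) x v.
  case/setUP => xV.
    apply: connect_adj_subset (subsetUl _ _) _.
    exact: sg_connectedP c1 xV (subsetP SV1 v vS1).
  apply: connect_adj_subset (subsetUr _ _) _.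
  exact: sg_connectedP c2 xV (subsetP SV2 v vS2).
exists (V1 :|: V2), (E1 :|: E2); split.
- rewrite /is_subgraph subUset sE1 sE2 /=; apply/forallP => e; apply/implyP.
  case/setUP => eE.
    by apply: subset_trans (subsetUl _ _); move/forallP/(_ e)/implyP: eV1; apply.
  by apply: subset_trans (subsetUr _ _); move/forallP/(_ e)/implyP: eV2; apply.
- apply/forallP => x; apply/implyP => /to_v xv.
  apply/forallP => y; apply/implyP => /to_v yv.
  by apply: connect_trans xv _; rewrite (sym_connect_sym (adj_sym _)).
- exact: setUSS.
- apply: le_trans (sg_weightU_le _ (weight_ge0 sE2)) _; exact: lerD.
Qed.

Lemma spans2_gt0 u v d : u != v -> spans [set u; v] d -> 0 < d.
Proof.
move=> uv [VR [ER [/andP[sE _] conn SV wd]]].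
have := sg_connectedP conn (subsetP SV u (set21 u v)) (subsetP SV v (set22 u v)).
case/connectP=> [[|b p] /=]; first by move=> _ vu; rewrite vu eqxx in uv.
case/andP=> ub _ _; apply: lt_le_trans wd; rewrite /sg_weight (bigD1 [set u; b]) //=.
apply: ltr_pwDl; first exact/weight_gt0/(subsetP sE).
by apply: sumr_ge0 => e /andP[/(weight_ge0 sE)].
Qed.

Lemma path_spans a p :
  path (adj E) a p -> spans [set v in a :: p] (sg_weight w (pedges a p)).
Proof.
move=> ap; exists [set v in a :: p], (pedges a p); split => //.
  rewrite /is_subgraph (pedges_sub ap) /=.
  by apply/forallP => e; apply/implyP; apply: pedges_verts.
exact: path_sg_connected.
Qed.

Lemma pedges_disjoint a1 p1 a2 p2 c : pedges a1 p1 \subset E ->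
  (forall v, v \in a1 :: p1 -> v \in a2 :: p2 -> v = c) ->
  [disjoint pedges a1 p1 & pedges a2 p2].
Proof.
move=> sE meet; rewrite disjoints_subset; apply/subsetP => e e1; rewrite inE.
apply/negP => e2; have card_e : #|e| = 2.
  by move/forallP/(_ e)/implyP: simpleE => /(_ (subsetP sE e e1)) /eqP.
have : e \subset [set c].
  apply/subsetP => v ve; rewrite inE; apply/eqP/meet.
    by have := subsetP (pedges_verts e1) v ve; rewrite inE.
  by have := subsetP (pedges_verts e2) v ve; rewrite inE.
by move/subset_leq_card; rewrite cards1 card_e.
Qed.

Lemma tripod_spans VR ER x y z : is_subgraph E VR ER -> sg_connected VR ER ->
  x \in VR -> y \in VR -> z \in VR ->
  exists c dx dy dz, [/\ spans [set x; c] dx, spans [set y; c] dy,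
                         spans [set z; c] dz & dx + dy + dz <= sg_weight w ER].
Proof.
move=> /andP[sE _] conn xV yV zV.
have [c [p1 [p2 [p3 [xp1 cp2 zp3 [cp1 yp2 cp3] [m12 m13 m23]]]]]] :=
  connect_tripod (sg_connectedP conn xV yV) (sg_connectedP conn zV xV).
have leg a p : path (adj ER) a p -> spans [set v in a :: p] (sg_weight w (pedges a p)).
  by move=> ap; apply/path_spans/(sub_path (sub_adj sE) ap).
exists c, (sg_weight w (pedges x p1)), (sg_weight w (pedges c p2)).
exists (sg_weight w (pedges z p3)); split.
- apply: spansW (lexx _) (leg _ _ xp1).
  by rewrite subUset !sub1set !in_set mem_head cp1.
- apply: spansW (lexx _) (leg _ _ cp2).
  by rewrite subUset !sub1set !in_set mem_head yp2.
- apply: spansW (lexx _) (leg _ _ zp3).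
  by rewrite subUset !sub1set !in_set mem_head cp3.
have [s1 s2 s3] : [/\ pedges x p1 \subset ER, pedges c p2 \subset ER
                    & pedges z p3 \subset ER] by split; apply: pedges_sub.
have sE1 := subset_trans s1 sE; have sE2 := subset_trans s2 sE.
rewrite -sg_weightU ?(pedges_disjoint sE1 m12) // -sg_weightU; last first.
  rewrite disjoints_subset subUset -!disjoints_subset.
  by rewrite (pedges_disjoint sE1 m13) (pedges_disjoint sE2 m23).
by apply: sg_weight_subset (weight_ge0 sE); rewrite !subUset s1 s2 s3.
Qed.

Lemma path_lipschitz phi a p :
  edge_lipschitz phi -> path (adj E) a p -> uniq (a :: p) ->
  phi (last a p) - phi a <= sg_weight w (pedges a p).
Proof.
move=> lip; elim: p a => [|b p IHp] a /=; first by rewrite subrr /sg_weight big_set0.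
case/andP=> ab bp /andP[abp ubp]; rewrite /sg_weight big_setU1 /=; last first.
  by apply: contra abp => /pedges_verts/subsetP/(_ a (set21 a b)); rewrite inE.
have := IHp b bp ubp; have := lip a b ab; rewrite /sg_weight; lra.
Qed.

Lemma spans_lipschitz phi u v d : edge_lipschitz phi -> spans [set u; v] d ->
  phi v - phi u <= d.
Proof.
move=> lip [VR [ER [/andP[sE _] conn SV wd]]].
have := sg_connectedP conn (subsetP SV u (set21 u v)) (subsetP SV v (set22 u v)).
case/connectP=> p0 /shortenP[p up uniq_p _] ->.
apply: le_trans (path_lipschitz lip (sub_path (sub_adj sE) up) uniq_p) _.
by apply: le_trans wd; apply: sg_weight_subset (pedges_sub up) (weight_ge0 sE).
Qed.

Lemma steiner_le S S' D d : steiner_dist E w S D -> S \subset S' -> spans S' d -> D <= d.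
Proof.
move=> [_ min] sS [VR [ER [sub conn SV wd]]].
exact: le_trans (min _ _ sub conn (subset_trans sS SV)) wd.
Qed.

Lemma steiner_tripod x y z D : steiner_dist E w [set x; y; z] D ->
  exists c dx dy dz, [/\ spans [set x; c] dx, spans [set y; c] dy,
                         spans [set z; c] dz & dx + dy + dz <= D].
Proof.
case=> -[VR [ER [sub conn /subsetP SV <-]]] _.
by apply: tripod_spans sub conn (SV x _) (SV y _) (SV z _); rewrite !inE eqxx ?orbT.
Qed.

Lemma steiner_dist_potentials x y z d (px py pz : T -> R) :
  edge_lipschitz px -> edge_lipschitz py -> edge_lipschitz pz ->
  spans [set x; y; z] d ->
  (forall c, d <= (px c - px x) + (py c - py y) + (pz c - pz z)) ->
  steiner_dist E w [set x; y; z] d.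
Proof.
move=> lx ly lz [VR [ER [sub conn SV wd]]] pot.
have lower VR' ER' : is_subgraph E VR' ER' -> sg_connected VR' ER' ->
    [set x; y; z] \subset VR' -> d <= sg_weight w ER'.
  move=> sub' conn' /subsetP SV'.
  have [xV yV zV] : [/\ x \in VR', y \in VR' & z \in VR'].
    by split; apply: SV'; rewrite !inE eqxx ?orbT.
  have [c [dx [dy [dz [Lx Ly Lz le_sum]]]]] := tripod_spans sub' conn' xV yV zV.
  have := spans_lipschitz lx Lx; have := spans_lipschitz ly Ly.
  have := spans_lipschitz lz Lz; have := pot c; lra.
split=> //; exists VR, ER; split => //.
by apply/le_anti; rewrite wd (lower VR ER).
Qed.

Arguments spansU v {S1 S2 d1 d2}.

Lemma spans_claw c x y z :
  [set x; c] \in E -> [set y; c] \in E -> [set z; c] \in E ->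
  spans [set x; y; z] (w [set x; c] + w [set y; c] + w [set z; c]).
Proof.
move=> /spans_edge xc /spans_edge yc /spans_edge zc.
by apply: spansW _ (lexx _) (spansU c _ _ (spansU c _ _ xc yc) zc); set_mem.
Qed.

Lemma steiner_cond_i i j k t Dt Dk Dj Di :
  steiner_dist E w [set i; j; k] Dt -> steiner_dist E w [set i; j; t] Dk ->
  steiner_dist E w [set i; k; t] Dj -> steiner_dist E w [set j; k; t] Di ->
  5 * Dt <= 3 * Dk + 3 * Dj + 2 * Di.
Proof.
move=> hS hA hB hC.
have [a [a_i [a_j [a_t [Ai Aj At sA]]]]] := steiner_tripod hA.
have [b [b_i [b_k [b_t [Bi Bk Bt sB]]]]] := steiner_tripod hB.
have [c [c_j [c_k [c_t [Cj Ck Ct sC]]]]] := steiner_tripod hC.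
have le1 : Dt <= a_i + a_j + b_i + b_k.
  apply: steiner_le hS _ (spansU b _ _ (spansU i _ _ (spansU a _ _ Ai Aj) Bi) Bk);
    by set_mem.
have le2 : Dt <= a_i + a_j + a_t + b_t + b_k.
  apply: steiner_le hS _
    (spansU b _ _ (spansU t _ _ (spansU a _ _ (spansU a _ _ Ai Aj) At) Bt) Bk);
    by set_mem.
have le3 : Dt <= a_i + a_t + c_t + c_j + c_k.
  apply: steiner_le hS _
    (spansU c _ _ (spansU c _ _ (spansU t _ _ (spansU a _ _ Ai At) Ct) Cj) Ck);
    by set_mem.
have le4 : Dt <= a_j + a_t + b_t + b_i + b_k.
  apply: steiner_le hS _
    (spansU b _ _ (spansU b _ _ (spansU t _ _ (spansU a _ _ Aj At) Bt) Bi) Bk);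
    by set_mem.
have le5 : Dt <= b_i + b_t + c_t + c_j + c_k.
  apply: steiner_le hS _
    (spansU c _ _ (spansU c _ _ (spansU t _ _ (spansU b _ _ Bi Bt) Ct) Cj) Ck);
    by set_mem.
lra.
Qed.

Lemma steiner_cond_ii i j k t Di Dk Dj : i != t ->
  steiner_dist E w [set j; k; t] Di -> steiner_dist E w [set i; j; t] Dk ->
  steiner_dist E w [set i; k; t] Dj -> Di < Dk + Dj.
Proof.
move=> it hS hA hB.
have [a [a_i [a_j [a_t [Ai Aj At sA]]]]] := steiner_tripod hA.
have [b [b_i [b_k [b_t [Bi Bk Bt sB]]]]] := steiner_tripod hB.
have le1 : Di <= a_j + a_t + b_t + b_k.
  apply: steiner_le hS _ (spansU b _ _ (spansU t _ _ (spansU a _ _ Aj At) Bt) Bk);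
    by set_mem.
have := spans_ge0 Ai; have := spans_ge0 Bi; have := spans_ge0 Bt.
have [ia|ia] := eqVneq i a; last by have := spans2_gt0 ia Ai; lra.
have [ib|ib] := eqVneq i b; last by have := spans2_gt0 ib Bi; lra.
subst a b; have : 0 < b_t by apply: spans2_gt0 Bt; rewrite eq_sym.
have : Di <= a_j + a_t + b_k.
  apply: steiner_le hS _ (spansU i _ _ (spansU i _ _ Aj At) Bk); by set_mem.
lra.
Qed.

End Steiner.

Arguments spansU {R T E w} posE v {S1 S2 d1 d2}.

Section RelationGraph.
Variables (R : realType) (T : finType) (g : rel T) (W : T -> T -> R).
Hypotheses (g_sym : symmetric g) (g_irr : irreflexive g).
Hypotheses (W_sym : forall u v, W u v = W v u) (W_gt0 : forall u v, g u v -> 0 < W u v).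

Definition rel_edges : {set {set T}} :=
  [set e | [exists u, exists v, g u v && (e == [set u; v])]].

(* Both orientations of an edge are counted, hence the halving. *)
Definition rel_weight (e : {set T}) : R :=
  (\sum_(u in e) \sum_(v in e) (if g u v then W u v else 0)) / 2.

Lemma rel_edgesP u v : ([set u; v] \in rel_edges) = g u v.
Proof.
apply/idP/idP => [|uv]; last first.
  by rewrite inE; apply/existsP; exists u; apply/existsP; exists v; rewrite uv eqxx.
rewrite inE => /existsP[u' /existsP[v' /andP[g' /eqP e]]].
have /andP[] : (u' \in [set u; v]) && (v' \in [set u; v]) by rewrite e set21 set22.
rewrite !inE => /pred2P[] eu /pred2P[] ev; move: g'; rewrite eu ev ?g_irr //.
by rewrite g_sym.
Qed.

Lemma rel_neq u v : g u v -> u != v.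
Proof. by apply: contraTneq => ->; rewrite g_irr. Qed.

Lemma rel_weight2 u v : g u v -> rel_weight [set u; v] = W u v.
Proof.
move=> uv; have u_v : u \notin [set v] by rewrite inE rel_neq.
rewrite /rel_weight big_setU1 // big_set1 !big_setU1 // !big_set1 /=.
by rewrite !g_irr uv g_sym uv W_sym; lra.
Qed.

Lemma rel_edges_simple : simple_edges rel_edges.
Proof.
apply/forallP => e; apply/implyP; rewrite inE => /existsP[u /existsP[v /andP[uv /eqP->]]].
by rewrite cards2 rel_neq.
Qed.

Lemma rel_weight_pos : pos_weight rel_edges rel_weight.
Proof.
apply/forallP => e; apply/implyP; rewrite inE => /existsP[u /existsP[v /andP[uv /eqP->]]].
by rewrite rel_weight2 // W_gt0.
Qed.

Lemma spans_rel_edge u v : g u v -> spans rel_edges rel_weight [set u; v] (W u v).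
Proof. by move=> uv; rewrite -rel_weight2 //; apply: spans_edge; rewrite rel_edgesP. Qed.

Lemma spans_rel_claw c x y z : g x c -> g y c -> g z c ->
  spans rel_edges rel_weight [set x; y; z] (W x c + W y c + W z c).
Proof.
move=> xc yc zc; rewrite -!rel_weight2 //.
by apply: (spans_claw rel_weight_pos); rewrite rel_edgesP.
Qed.

Lemma rel_lipschitz (phi : T -> R) : (forall u v, g u v -> phi v - phi u <= W u v) ->
  edge_lipschitz rel_edges rel_weight phi.
Proof. by move=> lip u v; rewrite rel_edgesP => uv; rewrite rel_weight2 // lip. Qed.

End RelationGraph.

Section Star.
Variables (R : realType) (T : finType) (h : T) (A : T -> R).
Hypotheses (A_hub : A h = 0) (A_gt0 : forall v, v != h -> 0 < A v).

Definition star_rel : rel T := fun u v => (u != v) && ((u == h) || (v == h)).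
Definition star_weight (u v : T) : R := A u + A v.

Let star_edges := rel_edges star_rel.
Let star_w := rel_weight star_rel star_weight.

Let A_ge0 v : 0 <= A v.
Proof. by have [->|/A_gt0/ltW //] := eqVneq v h; rewrite A_hub. Qed.

Lemma star_sym : symmetric star_rel.
Proof. by move=> u v; rewrite /star_rel eq_sym orbC. Qed.

Lemma star_irr : irreflexive star_rel.
Proof. by move=> u; rewrite /star_rel eqxx. Qed.

Lemma star_weight_sym u v : star_weight u v = star_weight v u.
Proof. exact: addrC. Qed.

Lemma star_weight_gt0 u v : star_rel u v -> 0 < star_weight u v.
Proof.
case/andP=> uv /orP[]/eqP uvh; subst; rewrite /star_weight A_hub.
  by rewrite add0r A_gt0 // eq_sym.
by rewrite addr0 A_gt0.
Qed.

Let star_simple : simple_edges star_edges := rel_edges_simple star_irr.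
Let star_pos : pos_weight star_edges star_w :=
  rel_weight_pos star_sym star_irr star_weight_sym star_weight_gt0.

Lemma star_leg x : spans star_edges star_w [set x; h] (A x).
Proof.
have [->|xh] := eqVneq x h; first by rewrite setUid A_hub; apply: spans1.
rewrite -[A x]addr0 -A_hub.
apply: (spans_rel_edge star_sym star_irr star_weight_sym).
by rewrite /star_rel /= xh eqxx orbT.
Qed.

Lemma star_steiner x y z : x != y -> x != z -> y != z ->
  steiner_dist star_edges star_w [set x; y; z] (A x + A y + A z).
Proof.
move=> xy xz yz.
pose pot a v := if v == a then 0 else A a + A v.
have lip a : edge_lipschitz star_edges star_w (pot a).
  apply: (rel_lipschitz star_sym star_irr star_weight_sym) => u v /andP[uv _].
  have := A_ge0 a; have := A_ge0 u; have := A_ge0 v; rewrite /pot /star_weight.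
  by case: (eqVneq v a) => [->|_]; case: (eqVneq u a) => [->|_]; lra.
apply: (steiner_dist_potentials star_simple star_pos (lip x) (lip y) (lip z)).
  apply: spansW _ (lexx _)
    (spansU star_pos h _ _ (spansU star_pos h _ _ (star_leg x) (star_leg y)) (star_leg z));
    by set_mem.
move=> c; have := A_ge0 x; have := A_ge0 y; have := A_ge0 z; have := A_ge0 c.
have [yx zx zy] : [/\ y != x, z != x & z != y] by split; rewrite eq_sym.
rewrite /pot; have [->|_] := eqVneq c x.
  by rewrite !eqxx ?(negbTE xy) ?(negbTE xz); lra.
have [->|_] := eqVneq c y; first by rewrite !eqxx ?(negbTE yx) ?(negbTE yz); lra.
have [->|_] := eqVneq c z; first by rewrite !eqxx ?(negbTE zx) ?(negbTE zy); lra.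
rewrite !eqxx; lra.
Qed.

End Star.

Definition terminal (i : 'I_4) : 'I_7 := widen_ord (isT : (4 <= 7)%N) i.
Definition hub4 : 'I_7 := @Ordinal 7 4 isT.
Definition hub5 : 'I_7 := @Ordinal 7 5 isT.
Definition hub6 : 'I_7 := @Ordinal 7 6 isT.
Definition o0 : 'I_4 := @Ordinal 4 0 isT.
Definition o1 : 'I_4 := @Ordinal 4 1 isT.
Definition o2 : 'I_4 := @Ordinal 4 2 isT.
Definition o3 : 'I_4 := @Ordinal 4 3 isT.

Section Gadget.
Variables (R : realType) (a0 a1 a2 b : R).
Hypotheses (a0_gt0 : 0 < a0) (a1_gt0 : 0 < a1) (a2_gt0 : 0 < a2) (b_gt0 : 0 < b).
Hypotheses (a0_ge : 2 * b <= a0) (a1_ge : 2 * b <= a1) (a2_ge : 2 * b <= a2).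

(* Vertices 0, 1, 2, 3 are the terminals and 4, 5, 6 the hubs.  Terminal
   u < 3 is joined with weight a_u to the two hubs other than u + 4, and
   terminal 3 with weight b to all three hubs; gadget_dist is the resulting
   shortest-path metric (on vertices 0..6). *)
Definition gadget_a (u : nat) : R := match u with 0 => a0 | 1 => a1 | _ => a2 end.

Definition gadget_dist (u v : nat) : R :=
  if u == v then 0
  else if (u < 3)%N && (v < 3)%N then gadget_a u + gadget_a v
  else if (u < 3)%N && (v == 3)%N then gadget_a u + b
  else if (v < 3)%N && (u == 3)%N then gadget_a v + b
  else if (u < 3)%N then (if v == (u + 4)%N then gadget_a u + 2 * b else gadget_a u)
  else if (v < 3)%N then (if u == (v + 4)%N then gadget_a v + 2 * b else gadget_a v)
  else if (u == 3)%N || (v == 3)%N then b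
  else 2 * b.

Definition gadget_adj (u v : nat) : bool :=
  (u, v) \in [:: (0, 5); (0, 6); (1, 4); (1, 6); (2, 4); (2, 5); (3, 4); (3, 5); (3, 6)]%N.

Definition gadget_rel : rel 'I_7 := fun u v => gadget_adj u v || gadget_adj v u.
Definition gadget_weight (u v : 'I_7) : R := gadget_dist u v.

Let gadget_edges := rel_edges gadget_rel.
Let gadget_w := rel_weight gadget_rel gadget_weight.

Local Ltac vertex_cases := case=> [[|[|[|[|[|[|[|?]]]]]]] ?] //.

Local Ltac gadget_lra := rewrite /gadget_weight /gadget_dist /=;
  move: a0_gt0 a1_gt0 a2_gt0 b_gt0 a0_ge a1_ge a2_ge; lra.

Lemma gadget_sym : symmetric gadget_rel.
Proof. by move=> u v; rewrite /gadget_rel orbC. Qed.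

Lemma gadget_irr : irreflexive gadget_rel.
Proof. by vertex_cases. Qed.

Lemma gadget_weight_sym u v : gadget_weight u v = gadget_weight v u.
Proof.
by move: u v; vertex_cases; vertex_cases; rewrite /gadget_weight /gadget_dist /=; lra.
Qed.

Lemma gadget_weight_gt0 u v : gadget_rel u v -> 0 < gadget_weight u v.
Proof.
by move: u v; vertex_cases; vertex_cases; rewrite /gadget_rel /= => // _; gadget_lra.
Qed.

Let gadget_simple : simple_edges gadget_edges := rel_edges_simple gadget_irr.
Let gadget_pos : pos_weight gadget_edges gadget_w :=
  rel_weight_pos gadget_sym gadget_irr gadget_weight_sym gadget_weight_gt0.

Lemma gadget_lipschitz (i : 'I_4) :
  edge_lipschitz gadget_edges gadget_w (fun v => gadget_dist (terminal i) v).
Proof.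
apply: (rel_lipschitz gadget_sym gadget_irr gadget_weight_sym).
by move: i; case=> [[|[|[|[|?]]]] ?] //; vertex_cases; vertex_cases;
  rewrite /gadget_rel /= => // _; gadget_lra.
Qed.

Let gadget_edge u v (uv : gadget_rel u v) :
  spans gadget_edges gadget_w [set u; v] (gadget_weight u v) :=
  spans_rel_edge gadget_sym gadget_irr gadget_weight_sym uv.

Let gadget_claw c x y z (xc : gadget_rel x c) (yc : gadget_rel y c) (zc : gadget_rel z c) :
  spans gadget_edges gadget_w [set x; y; z]
    (gadget_weight x c + gadget_weight y c + gadget_weight z c) :=
  spans_rel_claw gadget_sym gadget_irr gadget_weight_sym gadget_weight_gt0 xc yc zc.

Local Ltac gadget_close := solve [by set_mem | by [] | gadget_lra].

Lemma gadget_steiner3 :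
  steiner_dist gadget_edges gadget_w [set terminal o0; terminal o1; terminal o2]
    (a0 + a1 + a2 + 2 * b).
Proof.
apply: (steiner_dist_potentials gadget_simple gadget_pos (gadget_lipschitz o0)
  (gadget_lipschitz o1) (gadget_lipschitz o2)); last by vertex_cases; gadget_lra.
have claw013 := @gadget_claw hub6 (terminal o0) (terminal o1) (terminal o3) isT isT isT.
have path324 := spansU gadget_pos hub4 (set22 _ _) (set22 _ _)
  (@gadget_edge (terminal o3) hub4 isT) (@gadget_edge (terminal o2) hub4 isT).
by apply: spansW _ _ (spansU gadget_pos (terminal o3) _ _ claw013 path324); gadget_close.
Qed.

Lemma gadget_steiner2 :
  steiner_dist gadget_edges gadget_w [set terminal o0; terminal o1; terminal o3]
    (a0 + a1 + b).
Proof.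
apply: (steiner_dist_potentials gadget_simple gadget_pos (gadget_lipschitz o0)
  (gadget_lipschitz o1) (gadget_lipschitz o3)); last by vertex_cases; gadget_lra.
apply: spansW (subxx _) _
  (@gadget_claw hub6 (terminal o0) (terminal o1) (terminal o3) isT isT isT); gadget_lra.
Qed.

Lemma gadget_steiner1 :
  steiner_dist gadget_edges gadget_w [set terminal o0; terminal o2; terminal o3]
    (a0 + a2 + b).
Proof.
apply: (steiner_dist_potentials gadget_simple gadget_pos (gadget_lipschitz o0)
  (gadget_lipschitz o2) (gadget_lipschitz o3)); last by vertex_cases; gadget_lra.
apply: spansW (subxx _) _
  (@gadget_claw hub5 (terminal o0) (terminal o2) (terminal o3) isT isT isT); gadget_lra.
Qed.

Lemma gadget_steiner0 :
  steiner_dist gadget_edges gadget_w [set terminal o1; terminal o2; terminal o3]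
    (a1 + a2 + b).
Proof.
apply: (steiner_dist_potentials gadget_simple gadget_pos (gadget_lipschitz o1)
  (gadget_lipschitz o2) (gadget_lipschitz o3)); last by vertex_cases; gadget_lra.
apply: spansW (subxx _) _
  (@gadget_claw hub4 (terminal o1) (terminal o2) (terminal o3) isT isT isT); gadget_lra.
Qed.

End Gadget.

Lemma ord4_cases (i : 'I_4) : [\/ i = o0, i = o1, i = o2 | i = o3].
Proof.
by case: i => [[|[|[|[|?]]]] ?] //; [constructor 1|constructor 2|constructor 3|constructor 4];
  apply: val_inj.
Qed.

Lemma setC1_ord4 (i j k t : 'I_4) : i != j -> i != k -> j != k ->
  i != t -> j != t -> k != t -> [set~ t] = [set i; j; k].
Proof.
move=> ij ik jk it jt kt; apply/eqP; rewrite eq_sym eqEcard cardsC1 card_ord.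
rewrite !subUset !sub1set !inE it jt kt /=.
by rewrite -setUA !cardsU1 cards1 !inE negb_or ij ik jk.
Qed.

Lemma imset_set3 (U V : finType) (f : U -> V) (a b c : U) :
  f @: [set a; b; c] = [set f a; f b; f c].
Proof. by rewrite -!setUA !imsetU1 imset_set1. Qed.

Section Realizability.
Variable R : realType.
Implicit Types D : 'I_4 -> R.

Definition realizable D :=
  exists (T : finType) (E : {set {set T}}) (w : {set T} -> R) (f : 'I_4 -> T),
    [/\ simple_edges E, pos_weight E w, injective f &
        forall i, steiner_dist E w (f @: [set~ i]) (D i)].

Definition cond_i D :=
  forall i j k t : 'I_4, i != j -> i != k -> i != t -> j != k -> j != t -> k != t ->
    5 * D t <= 3 * D k + 3 * D j + 2 * D i.

Definition cond_ii D :=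
  forall i j k : 'I_4, i != j -> i != k -> j != k -> D i < D k + D j.

Lemma ord4_fresh (i j k : 'I_4) : exists t, [/\ i != t, j != t & k != t].
Proof.
have /set0Pn[t] : ~: [set i; j; k] != set0.
  rewrite -card_gt0; have := cardsC [set i; j; k]; rewrite card_ord.
  have : (#|[set i; j; k]| <= 3)%N.
    by rewrite -setUA !cardsU1 cards1; case: (_ \notin _); case: (_ \notin _).
  lia.
by rewrite !inE !negb_or => /andP[/andP[ti tj] tk]; exists t; rewrite !(eq_sym _ t).
Qed.

Lemma realizable_cond D : realizable D -> cond_i D /\ cond_ii D.
Proof.
case=> T [E [w [f [sE pE f_inj hD]]]].
have hD3 i j k t : i != j -> i != k -> j != k -> i != t -> j != t -> k != t ->
    steiner_dist E w [set f i; f j; f k] (D t).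
  by move=> ij ik jk it jt kt; rewrite -imset_set3 -(setC1_ord4 ij ik jk it jt kt).
split=> [i j k t ij ik it jk jt kt | i j k ij ik jk].
  apply: (steiner_cond_i sE pE (hD3 i j k t _ _ _ _ _ _) (hD3 i j t k _ _ _ _ _ _)
    (hD3 i k t j _ _ _ _ _ _) (hD3 j k t i _ _ _ _ _ _)) => //; by rewrite eq_sym.
have [t [it jt kt]] := ord4_fresh i j k.
apply: (steiner_cond_ii sE pE _ (hD3 j k t i _ _ _ _ _ _) (hD3 i j t k _ _ _ _ _ _)
  (hD3 i k t j _ _ _ _ _ _)) => //; by rewrite ?inj_eq // eq_sym.
Qed.

Lemma sum_ord4 (F : 'I_4 -> R) : \sum_j F j = F o0 + F o1 + F o2 + F o3.
Proof.
rewrite !big_ord_recr big_ord0 /= add0r.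
by congr (F _ + F _ + F _ + F _); apply: val_inj.
Qed.

Lemma ord4_complement i : exists a b c, [/\ a != b, a != c, b != c,
  [set~ i] = [set a; b; c] & forall F : 'I_4 -> R, F a + F b + F c = \sum_j F j - F i].
Proof.
case: (ord4_cases i) => ->; [exists o1, o2, o3 | exists o0, o2, o3 | exists o0, o1, o3
  | exists o0, o1, o2]; by split => // [|F]; [apply: setC1_ord4 | rewrite sum_ord4; lra].
Qed.

Lemma realizable_perm (s : {perm 'I_4}) D : realizable (D \o s) -> realizable D.
Proof.
case=> T [E [w [f [sE pE f_inj hD]]]]; exists T, E, w, (f \o s^-1%g).
split=> // [|i]; first exact: inj_comp f_inj (@perm_inj _ _).
have sC : s^-1%g @: [set~ i] = [set~ s^-1%g i].
  rewrite (can_imset_pre _ (permKV s)); apply/setP => x.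
  by rewrite !inE (can2_eq (permK s) (permKV s)).
by rewrite imset_comp sC; have := hD (s^-1%g i); rewrite /= permKV.
Qed.

Lemma cond_i_perm D (s : 'I_4 -> 'I_4) : injective s -> cond_i D -> cond_i (D \o s).
Proof. by move=> s_inj hI i j k t *; apply: hI; rewrite inj_eq. Qed.

Lemma cond_ii_perm D (s : 'I_4 -> 'I_4) : injective s -> cond_ii D -> cond_ii (D \o s).
Proof. by move=> s_inj hII i j k *; apply: hII; rewrite inj_eq. Qed.

Lemma realizable_star D (T : finType) (f : 'I_4 -> T) (h : T) (A : T -> R) :
  injective f -> A h = 0 -> (forall v, v != h -> 0 < A v) ->
  (forall i, A (f i) = (\sum_j D j) / 3 - D i) -> realizable D.
Proof.
move=> f_inj A_hub A_gt0 Af.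
exists T, (rel_edges (star_rel h)), (rel_weight (star_rel h) (star_weight A)), f.
split=> // [||i].
- exact: rel_edges_simple (star_irr h).
- exact: rel_weight_pos (star_sym h) (star_irr h) (star_weight_sym A)
    (star_weight_gt0 A_hub A_gt0).
have [a [b [c [ab ac bc -> sumE]]]] := ord4_complement i.
have -> : D i = A (f a) + A (f b) + A (f c) by rewrite !Af; have := sumE D; lra.
by rewrite imset_set3; apply: star_steiner; rewrite ?inj_eq.
Qed.

Lemma cond_ii_lt_max D t v : cond_ii D -> 3 * D t = \sum_j D j -> v != t -> D v < D t.
Proof.
move=> hII Dt vt; have [a [b [c [ab ac bc Ct sumE]]]] := ord4_complement t.
have := sumE D; rewrite -Dt.
have: v \in [set~ t] by rewrite !inE.
have [ta tb tc] : [/\ t != a, t != b & t != c].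
  by split; rewrite eq_sym -in_setC1 Ct !inE eqxx ?orbT.
rewrite Ct !inE => /orP[/orP[]|] /eqP->.
- by have := hII t b c tb tc bc; lra.
- by have := hII t a c ta tc ac; lra.
- by have := hII t a b ta tb ab; lra.
Qed.

Lemma realizable_gadget D : cond_i D -> cond_ii D -> \sum_j D j < 3 * D o3 ->
  realizable D.
Proof.
move=> hI hII; rewrite sum_ord4 => big3.
set b := 3 * D o3 - (D o0 + D o1 + D o2 + D o3).
set a0 := D o1 + D o2 - D o3; set a1 := D o0 + D o2 - D o3; set a2 := D o0 + D o1 - D o3.
have b_gt0 : 0 < b by rewrite /b; lra.
have a0_gt0 : 0 < a0 by have := hII o3 o1 o2 isT isT isT; rewrite /a0; lra.
have a1_gt0 : 0 < a1 by have := hII o3 o0 o2 isT isT isT; rewrite /a1; lra.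
have a2_gt0 : 0 < a2 by have := hII o3 o0 o1 isT isT isT; rewrite /a2; lra.
have a0_ge : 2 * b <= a0 by have := hI o0 o1 o2 o3 isT isT isT isT isT isT; rewrite /a0 /b; lra.
have a1_ge : 2 * b <= a1 by have := hI o1 o0 o2 o3 isT isT isT isT isT isT; rewrite /a1 /b; lra.
have a2_ge : 2 * b <= a2 by have := hI o2 o0 o1 o3 isT isT isT isT isT isT; rewrite /a2 /b; lra.
exists 'I_7, (rel_edges gadget_rel), (rel_weight gadget_rel (gadget_weight a0 a1 a2 b)).
exists terminal; split.
- exact: rel_edges_simple gadget_irr.
- exact: rel_weight_pos gadget_sym gadget_irr (gadget_weight_sym a0 a1 a2 b)
    (gadget_weight_gt0 a0_gt0 a1_gt0 a2_gt0 b_gt0).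
- by move=> x y /(congr1 val) /= /val_inj.
move=> i; case: (ord4_cases i) => ->.
- rewrite (@setC1_ord4 o1 o2 o3) // imset_set3.
  have -> : D o0 = a1 + a2 + b by rewrite /a1 /a2 /b; lra.
  exact: gadget_steiner0.
- rewrite (@setC1_ord4 o0 o2 o3) // imset_set3.
  have -> : D o1 = a0 + a2 + b by rewrite /a0 /a2 /b; lra.
  exact: gadget_steiner1.
- rewrite (@setC1_ord4 o0 o1 o3) // imset_set3.
  have -> : D o2 = a0 + a1 + b by rewrite /a0 /a1 /b; lra.
  exact: gadget_steiner2.
- rewrite (@setC1_ord4 o0 o1 o2) // imset_set3.
  have -> : D o3 = a0 + a1 + a2 + 2 * b by rewrite /a0 /a1 /a2 /b; lra.
  exact: gadget_steiner3.
Qed.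

Lemma cond_realizable D : cond_i D -> cond_ii D -> realizable D.
Proof.
move=> hI hII.
have [t big_t|no_big] := pickP (fun t => \sum_j D j < 3 * D t).
  apply: (@realizable_perm (tperm t o3) D); apply: realizable_gadget.
  - exact: cond_i_perm (@perm_inj _ _) hI.
  - exact: cond_ii_perm (@perm_inj _ _) hII.
  have -> : \sum_j (D \o tperm t o3) j = \sum_j D j.
    by symmetry; apply: reindex_inj; apply: perm_inj.
  by rewrite /= tpermR.
have [t /eqP eq_t|no_eq] := pickP (fun t => 3 * D t == \sum_j D j).
  apply: (@realizable_star D _ id t (fun v => (\sum_j D j) / 3 - D v)) => // [|v vt].
    by rewrite -eq_t; lra.
  by have := cond_ii_lt_max hII eq_t vt; rewrite -eq_t; lra.
pose A v := if v is Some i then (\sum_j D j) / 3 - D i else 0.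
apply: (@realizable_star D _ Some None A).
- exact: Some_inj.
- by [].
- case=> // i _ /=.
  have : 3 * D i < \sum_j D j.
    by rewrite lt_neqAle (negbT (no_eq i)) leNgt (negbT (no_big i)).
  lra.
- by [].
Qed.

End Realizability.

Unset Implicit Arguments.

Theorem theorem4p2 (R : realType) (Dh : 'I_4 -> R) (Dpos : forall i, 0 < Dh i) :
  (exists (T : finType) (E : {set {set T}}) (w : {set T} -> R) (f : 'I_4 -> T),
      [/\ simple_edges E, pos_weight E w, injective f &
          forall i : 'I_4, steiner_dist E w (f @: [set~ i]) (Dh i)])
  <->
  ((forall i j k t : 'I_4, i != j -> i != k -> i != t -> j != k -> j != t -> k != t ->
      5 * Dh t <= 3 * Dh k + 3 * Dh j + 2 * Dh i) /\
   (forall i j k : 'I_4, i != j -> i != k -> j != k -> Dh i < Dh k + Dh j)).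
Proof.
split; first exact: realizable_cond.
by case; apply: cond_realizable.
Qed.
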